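(* Let $k\ge 2$ and let $P=(p_1,\dots,p_k)$ and $Q=(q_1,\dots,q_k)$ be two multinomial (categorical) probability distributions over the same index set $\{1,\dots,k\}$. Suppose the indices of the largest probabilities of $P$ and $Q$ do not match, i.e. $\arg\max_i p_i \neq \arg\max_j q_j$. Then $$d_{H^2}(Q,P)\;\ge\; 1-\sqrt{\frac{2-\bigl(\sqrt{p_{(1)}}-\sqrt{p_{(2)}}\bigr)^2}{2}},$$ where $p_{(1)}$ and $p_{(2)}$ denote the first and second largest probabilities among $p_1,\dots,p_k$.
   Context: The squared Hellinger distance is $d_{H^2}(Q,P)=1-\sum_{i=1}^k\sqrt{p_iq_i}=\frac12\sum_{i=1}^k(\sqrt{p_i}-\sqrt{q_i})^2$. *)

From HB Require Import structures.
From mathcomp Require Import all_boot all_order all_algebra.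
From mathcomp Require Import reals.
Set Implicit Arguments. Unset Strict Implicit. Unset Printing Implicit Defensive.
Import Order.TTheory GRing.Theory Num.Theory.
Local Open Scope ring_scope.

Definition is_distr (R : realType) (k : nat) (p : 'I_k -> R) : Prop :=
  (forall i, 0 <= p i) /\ \sum_(i < k) p i = 1.

Definition hellinger2 (R : realType) (k : nat) (q p : 'I_k -> R) : R :=
  1 - \sum_(i < k) Num.sqrt (p i * q i).

Definition sorted_probs (R : realType) (k : nat) (p : 'I_k -> R) : seq R :=
  sort (fun x y : R => y <= x) [seq p i | i <- enum 'I_k].

Definition p_first (R : realType) (k : nat) (p : 'I_k -> R) : R :=
  nth 0 (sorted_probs p) 0.
Definition p_second (R : realType) (k : nat) (p : 'I_k -> R) : R :=
  nth 0 (sorted_probs p) 1.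

(* Write x = sqrt p and y = sqrt q, so that d_{H^2}(Q,P) = 1 - sum_l x_l y_l and
   sum_l x_l^2 = sum_l y_l^2 = 1.  As i is an argmax of P and j one of Q, we have
   x_j <= x_i and y_i <= y_j, so replacing both x_i and x_j by their mean can only
   increase sum_l x_l y_l, while it lowers sum_l x_l^2 to 1 - (x_i - x_j)^2/2.
   Cauchy-Schwarz then bounds sum_l x_l y_l by sqrt (1 - (x_i - x_j)^2/2), and
   x_i - x_j >= sqrt p_(1) - sqrt p_(2) >= 0 because p_i = p_(1) and p_j <= p_(2). *)

From HB Require Import structures.
From mathcomp Require Import all_boot all_order all_algebra.
From mathcomp Require Import reals.
From mathcomp Require Import ring lra.
Import Order.TTheory GRing.Theory Num.Theory.
Set Implicit Arguments. Unset Strict Implicit. Unset Printing Implicit Defensive.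
Local Open Scope ring_scope.

Section SortedProbs.
Variables (R : realType) (k : nat) (p : 'I_k -> R).

Lemma perm_sorted_probs : perm_eq (sorted_probs p) [seq p l | l <- enum 'I_k].
Proof. by rewrite perm_sort. Qed.

Lemma size_sorted_probs : size (sorted_probs p) = k.
Proof. by rewrite size_sort size_map size_enum_ord. Qed.

Lemma mem_sorted_probs l : p l \in sorted_probs p.
Proof. by rewrite (perm_mem perm_sorted_probs) map_f ?mem_enum. Qed.

Lemma sorted_probs_sorted : sorted (fun x y : R => y <= x) (sorted_probs p).
Proof. exact: (sort_sorted (@le_total _ R^d)). Qed.

Lemma sorted_ge_head (a : R) t :
  sorted (fun x y : R => y <= x) (a :: t) -> {in t, forall x, x <= a}.
Proof.
have ge_trans : transitive (fun x y : R => y <= x).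
  by move=> y x z /= yx zy; apply: le_trans yx.
by move=> /(order_path_min ge_trans)/allP.
Qed.

Lemma p_first_argmax i : (forall l, p l <= p i) -> p_first p = p i.
Proof.
move=> p_le_pi; have := mem_sorted_probs i; have := sorted_probs_sorted.
rewrite /p_first; case def_s: (sorted_probs p) => [//|a t] /= s_sorted.
rewrite inE => /predU1P[-> //|pi_t].
apply/le_anti; rewrite (sorted_ge_head s_sorted pi_t) andbT.
have /mapP[l _ ->] : a \in [seq p l | l <- enum 'I_k].
  by rewrite -(perm_mem perm_sorted_probs) def_s mem_head.
exact: p_le_pi.
Qed.

Lemma p_second_le_first : (1 < k)%N -> p_second p <= p_first p.
Proof.
rewrite /p_first /p_second -[X in (1 < X)%N]size_sorted_probs.
by have := sorted_probs_sorted; case: (sorted_probs p) => [|a [|b t]] //= /andP[].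
Qed.

Lemma p_second_ge i j : (forall l, p l <= p i) -> j != i -> p j <= p_second p.
Proof.
move=> p_le_pi ji.
have i_enum : i \in enum 'I_k by rewrite mem_enum.
have perm_s : perm_eq (sorted_probs p)
                      (p i :: [seq p l | l <- rem i (enum 'I_k)]).
  exact: perm_trans perm_sorted_probs (perm_map p (perm_to_rem i_enum)).
have pj_rest : p j \in [seq p l | l <- rem i (enum 'I_k)].
  by rewrite map_f // mem_rem_uniq ?enum_uniq // inE ji mem_enum.
move: perm_s (p_first_argmax p_le_pi) sorted_probs_sorted.
rewrite /p_first /p_second; case: (sorted_probs p) => [|a t] /=.
  by move/perm_size.
move=> + a_pi; rewrite a_pi perm_cons => /perm_mem t_rest.
rewrite -{}t_rest in pj_rest.
case: t pj_rest => [//|b t]; rewrite inE /= => /predU1P[-> _|pj_t /andP[_]].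
  exact: lexx.
by move=> /sorted_ge_head; apply.
Qed.

End SortedProbs.

Section SumInequalities.
Variables (R : rcfType) (I : finType).
Implicit Types (x y : I -> R) (i j : I).

Lemma bigD2 (F : I -> R) i j : i != j ->
  \sum_l F l = F i + F j + \sum_(l | (l != i) && (l != j)) F l.
Proof. by move=> ij; rewrite (bigD1 i) //= (bigD1 j) 1?eq_sym //= addrA. Qed.

Lemma cauchy_schwarz_sumr x y :
  \sum_l x l * y l <= Num.sqrt (\sum_l x l ^+ 2) * Num.sqrt (\sum_l y l ^+ 2).
Proof.
have sum_sqr_ge0 x' : 0 <= \sum_l x' l ^+ 2 by apply: sumr_ge0 => l _; exact: sqr_ge0.
have sum_mul_eq0 x' y' : \sum_l x' l ^+ 2 = 0 -> \sum_l x' l * y' l = 0.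
  move/psumr_eq0P => x'0; apply: big1 => l _.
  have /eqP := x'0 (fun l _ => sqr_ge0 (x' l)) l isT.
  by rewrite sqrf_eq0 => /eqP ->; rewrite mul0r.
have sqrt_mul_ge0 : 0 <= Num.sqrt (\sum_l x l ^+ 2) * Num.sqrt (\sum_l y l ^+ 2).
  by rewrite mulr_ge0 ?sqrtr_ge0.
have [x0|x_neq0] := eqVneq (\sum_l x l ^+ 2) 0; first by rewrite sum_mul_eq0.
have [y0|y_neq0] := eqVneq (\sum_l y l ^+ 2) 0.
  by under eq_bigr do rewrite mulrC; rewrite sum_mul_eq0.
have sqrt_gt0 x' : \sum_l x' l ^+ 2 != 0 -> 0 < Num.sqrt (\sum_l x' l ^+ 2).
  by move=> x'_neq0; rewrite sqrtr_gt0 lt_def x'_neq0 sum_sqr_ge0.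
have [a_gt0 b_gt0] := (sqrt_gt0 x x_neq0, sqrt_gt0 y y_neq0).
have [a2 b2] := (sqr_sqrtr (sum_sqr_ge0 x), sqr_sqrtr (sum_sqr_ge0 y)).
set a := Num.sqrt _ in a_gt0 a2 *; set b := Num.sqrt _ in b_gt0 b2 *.
have amgm l : 2 * a * b * (x l * y l) <= b ^+ 2 * x l ^+ 2 + a ^+ 2 * y l ^+ 2.
  by have := sqr_ge0 (b * x l - a * y l); nra.
have : 2 * a * b * \sum_l x l * y l <= 2 * a ^+ 2 * b ^+ 2.
  rewrite mulr_sumr; apply: le_trans (ler_sum _ (fun l _ => amgm l)) _.
  by rewrite big_split /= -!mulr_sumr -a2 -b2; lra.
have -> : 2 * a ^+ 2 * b ^+ 2 = 2 * a * b * (a * b) by ring.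
by rewrite ler_pM2l // !mulr_gt0.
Qed.

Definition avg_pair x i j : I -> R :=
  fun l => if (l == i) || (l == j) then (x i + x j) / 2 else x l.

Lemma sum_avg_pair (F : R -> R -> R) x y i j : i != j ->
  \sum_l F (avg_pair x i j l) (y l) =
  F ((x i + x j) / 2) (y i) + F ((x i + x j) / 2) (y j)
  + \sum_(l | (l != i) && (l != j)) F (x l) (y l).
Proof.
move=> ij; rewrite (bigD2 _ ij) /avg_pair !eqxx orbT (negbTE ij) /=.
by congr (_ + _); apply: eq_bigr => l /andP[/negbTE -> /negbTE ->].
Qed.

Lemma sum_mul_le_avg_pair x y i j : i != j -> 0 <= (x i - x j) * (y j - y i) ->
  \sum_l x l * y l <= \sum_l avg_pair x i j l * y l.
Proof.
move=> ij xy; rewrite (sum_avg_pair (fun a b => a * b)) // (bigD2 _ ij) lerD2r.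
nra.
Qed.

Lemma sum_sqr_avg_pair x i j : i != j ->
  \sum_l avg_pair x i j l ^+ 2 = \sum_l x l ^+ 2 - (x i - x j) ^+ 2 / 2.
Proof.
move=> ij; rewrite (sum_avg_pair (fun a _ => a ^+ 2) x x) // (bigD2 _ ij).
by field.
Qed.

End SumInequalities.

Lemma sum_sqr_sqrt_distr (R : realType) (k : nat) (p : 'I_k -> R) :
  is_distr p -> \sum_l Num.sqrt (p l) ^+ 2 = 1.
Proof. by case=> p_ge0 <-; apply: eq_bigr => l _; rewrite sqr_sqrtr. Qed.

Lemma bhattacharyya_le (R : realType) (k : nat) (p q : 'I_k -> R) (i j : 'I_k) :
  is_distr p -> is_distr q -> i != j -> p j <= p i -> q i <= q j ->
  \sum_l Num.sqrt (p l * q l) <=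
    Num.sqrt (1 - (Num.sqrt (p i) - Num.sqrt (p j)) ^+ 2 / 2).
Proof.
move=> Pd Qd ij pji qij.
set x := fun l => Num.sqrt (p l); set y := fun l => Num.sqrt (q l).
have -> : \sum_l Num.sqrt (p l * q l) = \sum_l x l * y l.
  by apply: eq_bigr => l _; rewrite sqrtrM //; case: Pd.
have xy_ge0 : 0 <= (x i - x j) * (y j - y i).
  by rewrite mulr_ge0 // subr_ge0 ler_wsqrtr.
apply: le_trans (sum_mul_le_avg_pair ij xy_ge0) _.
apply: le_trans (cauchy_schwarz_sumr _ _) _.
by rewrite sum_sqr_avg_pair // !sum_sqr_sqrt_distr // sqrtr1 mulr1.
Qed.

Theorem mainTheorem2 (R : realType) (k : nat) (p q : 'I_k -> R)
  (i j : 'I_k) :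
  (2 <= k)%N ->
  is_distr p -> is_distr q ->
  (forall l, p l <= p i) ->  (* i is an argmax of P *)
  (forall l, q l <= q j) ->  (* j is an argmax of Q *)
  i != j ->
  hellinger2 q p >=
    1 - Num.sqrt ((2 - (Num.sqrt (p_first p) - Num.sqrt (p_second p)) ^+ 2) / 2).
Proof.
move=> k_ge2 Pd Qd p_le_pi q_le_qj ij.
rewrite /hellinger2 lerD2l lerN2.
apply: le_trans (bhattacharyya_le Pd Qd ij (p_le_pi j) (q_le_qj i)) _.
have gap_ge0 : 0 <= Num.sqrt (p_first p) - Num.sqrt (p_second p).
  by rewrite subr_ge0 ler_wsqrtr // p_second_le_first.
have gap_le : Num.sqrt (p_first p) - Num.sqrt (p_second p) <=
              Num.sqrt (p i) - Num.sqrt (p j).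
  by rewrite (p_first_argmax p_le_pi) lerD2l lerN2 ler_wsqrtr //
    (p_second_ge p_le_pi) // eq_sym.
by apply: ler_wsqrtr; nra.
Qed.
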